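(* Let $G$ be a graph on a Polish space $X$. Then $\mu(G)\leq\aleph_0$ implies $\lambda(G)\leq\aleph_0$, which in turn implies $\chi(G)\leq\aleph_0$.
   Context: A graph $G$ on $X$ is a symmetric irreflexive relation. A $G$-anticlique is a set with no two distinct $G$-connected points. The chromatic number $\chi(G)$ is the smallest cardinality of a collection of $G$-anticliques covering $X$. An orientation of $G$ is an antisymmetric relation $o$ whose symmetrization equals $G$; the $o$-outflow of $x$ is $\{y\colon\langle x,y\rangle\in o\}$. The coloring number $\mu(G)$ is the smallest cardinal $\kappa$ such that there is an orientation of $G$ in which the outflow of every vertex has size $<\kappa$ (so $\mu(G)\leq\aleph_0$ means there is an orientation with all outflows finite). A set $A\subset X$ is $G$-loose if for every $x\in X$ there is an open neighborhood $O$ of $x$ containing no elements of $A$ that are $G$-connected to $x$; the loose number $\lambda(G)$ is the smallest cardinality of a collection of $G$-loose sets covering $X$. *)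

From HB Require Import structures.
From mathcomp Require Import all_boot all_order all_algebra.
From mathcomp Require Import all_classical all_reals all_analysis.
Set Implicit Arguments. Unset Strict Implicit. Unset Printing Implicit Defensive.
Local Open Scope classical_set_scope.

Definition is_graph (X : Type) (G : X -> X -> Prop) : Prop :=
  (forall x y, G x y -> G y x) /\ (forall x, ~ G x x).

(* A Polish space, presented as a complete (pseudo)metric space which is
   Hausdorff (so the pseudometric is a metric) and separable. *)
Definition polish (R : realType) (X : completePseudoMetricType R) : Prop :=
  hausdorff_space X /\ exists D : set X, countable D /\ dense D.

Definition anticlique (X : Type) (G : X -> X -> Prop) (A : set X) : Prop :=
  forall x y, A x -> A y -> x <> y -> ~ G x y.

Definition orientation (X : Type) (G o : X -> X -> Prop) : Prop :=
  (forall x y, o x y -> o y x -> x = y) /\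
  (forall x y, G x y <-> (o x y \/ o y x)).

Definition outflow (X : Type) (o : X -> X -> Prop) (x : X) : set X :=
  [set y | o x y].

Definition loose (T : topologicalType) (G : T -> T -> Prop) (A : set T) : Prop :=
  forall x : T, exists O : set T, open O /\ O x /\
    (forall y, O y -> A y -> ~ G x y).

Definition coloring_number_le_aleph0 (X : Type) (G : X -> X -> Prop) : Prop :=
  exists o : X -> X -> Prop, orientation G o /\
    forall x, finite_set (outflow o x).

Definition loose_number_le_aleph0 (T : topologicalType) (G : T -> T -> Prop) : Prop :=
  exists C : set (set T), countable C /\ (forall A, C A -> loose G A) /\
    (forall x, exists A, C A /\ A x).

Definition chromatic_number_le_aleph0 (X : Type) (G : X -> X -> Prop) : Prop :=
  exists C : set (set X), countable C /\ (forall A, C A -> anticlique G A) /\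
    (forall x, exists A, C A /\ A x).

(* Everything runs through a countable base. If A is loose and U is a basic
   open set, the points of A inside U with no A-neighbour in U form an
   anticlique, and countably many such pieces cover A. If an orientation has
   finite outflows, regularity puts around each y a basic set b whose closure
   misses finitely many basic sets F covering the out-neighbours of y. The
   points of b with all out-neighbours in the union of F form a loose set:
   a point z outside the closure of b has a neighbourhood missing b, and a
   point z in the closure of b lies in no member of F, so its only neighbours
   in the piece are its own out-neighbours, a finite and hence closed set. *)
From HB Require Import structures.
From mathcomp Require Import all_boot all_order all_algebra.
From mathcomp Require Import all_classical all_reals all_analysis.
From mathcomp Require Import lra.
Set Implicit Arguments. Unset Strict Implicit.
Import Order.TTheory GRing.Theory Num.Theory.
Local Open Scope classical_set_scope.
Local Open Scope ring_scope.

Lemma basisP (T : topologicalType) (B : set (set T)) (x : T) (V : set T) :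
  basis B -> nbhs x V -> exists2 b, B b /\ b x & b `<=` V.
Proof. by move=> [_ Bx] /Bx. Qed.

Lemma separable_second_countable (R : realType) (X : pseudoMetricType R)
    (D : set X) :
  countable D -> dense D -> @second_countable X.
Proof.
move=> cD dD.
exists ((fun p : X * nat => (ball p.1 p.2.+1%:R^-1)°) @` (D `*` setT)).
  by apply: sub_countable (card_image_le _ _) _; exact: countableX.
split; first by move=> _ [p _ <-]; exact: open_interior.
move=> x V /nbhs_ballP [e e0 xeV].
have [n rn] : exists n : nat, n.+1%:R^-1 < e / 2.
  by have [N _ N_lt] := near_infty_natSinv_lt (PosNum (divr_gt0 e0 (ltr0n R 2)));
    exists N; apply: N_lt => /=.
set r : R := n.+1%:R^-1 in rn *; have r0 : 0 < r by rewrite invr_gt0.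
have [d [xd Dd]] : (ball x (r / 2))° `&` D !=set0.
  apply: dD; last exact: open_interior.
  by exists x; apply: nbhs_singleton; apply: nbhs_interior; apply: nbhsx_ballx;
    rewrite divr_gt0.
have {xd} dx : ball d (r / 2) x by apply: ball_sym; exact: interior_subset.
exists (ball d r)°; first split.
- by exists (d, n).
- apply: (filterS _ (nbhsx_ballx x (r / 2) _)); last by rewrite divr_gt0.
  by move=> y /(ball_triangle dx); rewrite -splitr.
- move=> y /interior_subset /(ball_triangle (ball_sym dx)) xy.
  by apply: xeV; apply: le_ball xy; lra.
Qed.

Section LooseToAnticliques.
Variables (T : topologicalType) (G : T -> T -> Prop).

Definition local_anticlique (A b : set T) : set T :=
  [set x | A x /\ b x /\ forall y, b y -> A y -> ~ G x y].

Lemma local_anticlique_anticlique A b : anticlique G (local_anticlique A b).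
Proof. by move=> x y [_ [_ xAb]] [Ay [yb _]] _; exact: xAb. Qed.

Lemma loose_local_anticlique_cover (B : set (set T)) A x :
  basis B -> loose G A -> A x -> exists2 b, B b & local_anticlique A b x.
Proof.
move=> bB lA Ax; have [U [oU [Ux UA]]] := lA x.
have [b [Bb bx] bU] := basisP bB (open_nbhs_nbhs (conj oU Ux)).
by exists b => //; split=> //; split=> // y /bU; exact: UA.
Qed.

Theorem loose_number_le_aleph0_chromatic :
  @second_countable T -> loose_number_le_aleph0 G -> chromatic_number_le_aleph0 G.
Proof.
move=> [B cB bB] [C [cC [lC covC]]].
exists ((fun p => local_anticlique p.1 p.2) @` (C `*` B)); split; [|split].
- by apply: sub_countable (card_image_le _ _) _; exact: countableX.
- by move=> _ [p _ <-]; exact: local_anticlique_anticlique.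
- move=> x; have [A [CA Ax]] := covC x.
  have [b Bb xAb] := loose_local_anticlique_cover bB (lC A CA) Ax.
  by exists (local_anticlique A b); split=> //; exists (A, b).
Qed.

End LooseToAnticliques.

Section OrientationToLoose.
Variables (T : topologicalType) (o : T -> T -> Prop).
Hypothesis T1 : @accessible_space T.
Hypothesis o_irr : forall x, ~ o x x.
Hypothesis finite_outflow : forall x, finite_set (outflow o x).

Definition separated_outflow (b : set T) (F : set (set T)) : set T :=
  [set y | b y /\ outflow o y `<=` \bigcup_(c in F) c /\
           forall c, F c -> closure b `&` c = set0].

Lemma open_outflowC x : open (~` outflow o x).
Proof. by rewrite openC; exact: (proj1 accessible_finite_set_closed). Qed.

Lemma separated_outflow_loose (G : T -> T -> Prop) b F :
  (forall x y, G x y -> o x y \/ o y x) -> loose G (separated_outflow b F).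
Proof.
move=> oG z; have [bz|nbz] := pselect (closure b z).
- exists (~` outflow o z); split; [exact: open_outflowC|split; first exact: o_irr].
  move=> y nzy [_ [yF bF]] /oG [//|/yF [c Fc cz]].
  by have : (closure b `&` c) z by []; rewrite bF.
- exists (~` outflow o z `&` ~` closure b); split.
    by apply: openI; [exact: open_outflowC|rewrite openC; exact: closed_closure].
  split; first by split; [exact: o_irr|exact: nbz].
  by move=> y [_ nby] [yb _]; have := nby (subset_closure yb).
Qed.

Lemma separated_outflow_cover (B : set (set T)) y :
  @regular_space T -> basis B ->
  exists b F, [/\ B b, F `<=` B, finite_set F & separated_outflow b F y].
Proof.
move=> regT bB.
have /regT [W yW clW] : nbhs y (~` outflow o y).
  by apply: open_nbhs_nbhs; split; [exact: open_outflowC|exact: o_irr].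
have [b [Bb yb] bW] := basisP bB yW.
have sep f : exists c, ~ closure W f -> [/\ B c, c f & c `<=` ~` closure W].
  have [Wf|nWf] := pselect (closure W f); first by exists set0.
  have : nbhs f (~` closure W).
    by apply: open_nbhs_nbhs; split=> //; rewrite openC; exact: closed_closure.
  by move=> /(basisP bB) [c [Bc cf] cW]; exists c.
have [c hc] := choice sep.
have out_sep f : outflow o y f -> [/\ B (c f), c f f & c f `<=` ~` closure W].
  by move=> yf; apply: hc => /clW.
exists b, (c @` outflow o y); split=> //.
- by move=> _ [f /out_sep [] ? _ _ <-].
- exact: finite_image.
- split=> //; split.
    by move=> f yf; exists (c f); [exists f|case: (out_sep f yf)].
  move=> _ [f /out_sep [_ _ cW] <-]; rewrite -subset0 => z [bz /cW].
  by apply; exact: closureS bz.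
Qed.

End OrientationToLoose.

Theorem coloring_number_le_aleph0_loose (T : topologicalType)
    (G : T -> T -> Prop) :
  @accessible_space T -> @regular_space T -> @second_countable T ->
  (forall x, ~ G x x) ->
  coloring_number_le_aleph0 G -> loose_number_le_aleph0 G.
Proof.
move=> T1 regT [B cB bB] G_irr; case=> o [[_ oG] fin].
have o_irr x : ~ o x x by move=> oxx; apply: (G_irr x); apply/oG; left.
pose I := B `*` [set F | F `<=` B /\ finite_set F].
exists ((fun p => separated_outflow o p.1 p.2) @` I); split; [|split].
- apply: sub_countable (card_image_le _ _) _.
  by apply: countableX => //; exact: countable_finite_subset.
- by move=> _ [p _ <-]; apply: separated_outflow_loose => // x y /oG.
- move=> y.
  have [b [F [Bb FB finF yF]]] := separated_outflow_cover T1 o_irr fin y regT bB.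
  by exists (separated_outflow o b F); split=> //; exists (b, F).
Qed.

Unset Implicit Arguments.
Theorem theorem3p4 (R : realType) (X : completePseudoMetricType R)
  (hX : polish X) (G : X -> X -> Prop) (hG : is_graph G) :
  (coloring_number_le_aleph0 G -> loose_number_le_aleph0 G) /\
  (loose_number_le_aleph0 G -> chromatic_number_le_aleph0 G).
Proof.
case: hX => hausX [D [cD dD]]; have scX := separable_second_countable cD dD.
split; last exact: loose_number_le_aleph0_chromatic.
apply: coloring_number_le_aleph0_loose => //.
- exact: hausdorff_accessible.
- exact: uniform_regular.
- by case: hG.
Qed.
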